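(* Let $0<a<1$ and let $(\mathbf X_j)$ be the persistent random walk on $\mathbb Z$ with persistence parameter $a$ started at $0$; let $\mathbf L:=\inf\{j\ge1:\mathbf X_j=0\}$ and $\mathbf R,\mathbf V$ the numbers of runs and short runs of the excursion path $\mathbf X_0,\dots,\mathbf X_{\mathbf L}$. Let $K:=E\{r^{\mathbf R}y^{\mathbf V}z^{\mathbf L}\}$ and $\alpha_a:=\sqrt{\beta_a^2-4x_a}$, the square root taken as the formal power series in $z$ (with coefficients polynomial in $r,y$) having value $1$ at $z=0$. Then $$K=\frac{1-\frac12\beta_a-\frac12\alpha_a}{1-a},$$ and $K=\lim_{N\to\infty}E\{r^{\mathbf R}y^{\mathbf V}z^{\mathbf L}\mid \mathbf H\le N\}$, where $\mathbf H:=\max_{1\le j\le\mathbf L}|\mathbf X_j|$.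
   Context: Persistent random walk with parameter $a$: increments $\varepsilon_j\in\{\pm1\}$, $P(\varepsilon_1=\pm1)=\frac12$, and for $j\ge1$ the next increment equals the previous one with probability $a$ and is reversed with probability $1-a$. A run is a maximal block of consecutive steps all $+1$ or all $-1$; a short run is a run of one step. $\tau_a:=1+(1-a)^2r^2z^2y(1-y)$, $x_a:=a^2z^2\tau_a^2$, $\beta_a:=1+z^2\big(a^2-(1-a)^2r^2(y^2+a^2(1-y)^2z^2)\big)$. The limit is coefficientwise in the power series in $z$. *)

From HB Require Import structures.
From mathcomp Require Import all_boot all_order all_algebra.
From mathcomp Require Import all_classical all_reals all_analysis.
Set Implicit Arguments. Unset Strict Implicit. Unset Printing Implicit Defensive.
Import Order.TTheory GRing.Theory Num.Theory.
Local Open Scope ring_scope.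

Definition step (b : bool) : int := if b then 1 else -1.

Definition pos (e : seq bool) (j : nat) : int :=
  \sum_(i < j) step (nth false e i).

(* Probability that the first size e increments equal e, for the
   persistent random walk with parameter a:  P(eps_1 = +-1) = 1/2,
   eps_{j+1} = eps_j with prob a, reversed with prob 1 - a. *)
Definition pathprob {R : realType} (a : R) (e : seq bool) : R :=
  2^-1 * \prod_(1 <= i < size e)
           (if nth false e i == nth false e i.-1 then a else 1 - a).

(* e is exactly the excursion up to L = inf{j >= 1 : X_j = 0}, L = size e. *)
Definition excursion (e : seq bool) : bool :=
  (0 < size e)%N && (pos e (size e) == 0)
  && [forall j : 'I_(size e), (0 < j)%N ==> (pos e j != 0)].

(* Number of runs (maximal blocks of equal steps) = number of run starts. *)
Definition nruns (e : seq bool) : nat :=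
  #|[set i : 'I_(size e) | (i == 0 :> nat) || (nth false e i != nth false e i.-1)]|.

(* Number of short runs (runs consisting of one step). *)
Definition nshort (e : seq bool) : nat :=
  #|[set i : 'I_(size e) |
      ((i == 0 :> nat) || (nth false e i != nth false e i.-1))
      && ((i.+1 == size e) || (nth false e i.+1 != nth false e i))]|.

Definition heightle (e : seq bool) (N : nat) : bool :=
  [forall j : 'I_(size e).+1, (0 < j)%N ==> (absz (pos e j) <= N)%N].

(* Coefficient of z^n in K = E{ r^R y^V z^L }. *)
Definition Kcoef {R : realType} (a r y : R) (n : nat) : R :=
  \sum_(e : n.-tuple bool | excursion e)
     pathprob a e * r ^+ nruns e * y ^+ nshort e.

(* Coefficient of z^n in E{ r^R y^V z^L ; H <= N } (not yet normalized). *)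
Definition KHcoef {R : realType} (a r y : R) (N n : nat) : R :=
  \sum_(e : n.-tuple bool | excursion e && heightle e N)
     pathprob a e * r ^+ nruns e * y ^+ nshort e.

Definition pLH {R : realType} (a : R) (N n : nat) : R :=
  \sum_(e : n.-tuple bool | excursion e && heightle e N) pathprob a e.

(* P(H <= N) = sum_n P(L = n, H <= N)   (L < oo a.s.) *)
Definition pH {R : realType} (a : R) (N : nat) : R :=
  limn (fun m => \sum_(n < m) pLH a N n).

Definition tau_a {R : realType} (a r y : R) : {poly R} :=
  1 + ((1 - a) ^+ 2 * r ^+ 2 * y * (1 - y))%:P * 'X ^+ 2.
Definition x_a {R : realType} (a r y : R) : {poly R} :=
  (a ^+ 2)%:P * 'X ^+ 2 * (tau_a a r y) ^+ 2.
Definition beta_a {R : realType} (a r y : R) : {poly R} :=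
  1 + 'X ^+ 2 * ((a ^+ 2)%:P - ((1 - a) ^+ 2 * r ^+ 2)%:P
                 * ((y ^+ 2)%:P + (a ^+ 2 * (1 - y) ^+ 2)%:P * 'X ^+ 2)).
Definition disc_a {R : realType} (a r y : R) : {poly R} :=
  (beta_a a r y) ^+ 2 - 4%:R *: x_a a r y.

Definition fps_mul {R : realType} (f g : nat -> R) (n : nat) : R :=
  \sum_(i < n.+1) f i * g (n - i)%N.

(* Decompose an excursion at its first step and follow the state (last step,
   whether its run has length one so far): then [pathprob * r^R * y^V] is a
   product of one-step weights.  Descents from height one to zero, sorted by
   initial and final state, have generating functions satisfying a closed
   quadratic system, since a descent from height two is two descents from
   height one.  Eliminating them shows that [G := 1 - (1 - a) K] satisfies
   [G^2 - beta_a G + x_a = 0], so [2 G - beta_a] is a square root of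
   [beta_a^2 - 4 x_a] with constant term 1, and such a root is unique.
   For [r = y = 1] the same equation, summed up to [z = 1] on truncations,
   forces [P(L < oo) = 1]; hence [P(H <= N) -> 1], while
   [E{r^R y^V z^L; H <= N}] agrees with [K] up to [z^N] because [|X_j| <= j]. *)

From HB Require Import structures.
From mathcomp Require Import all_boot all_order all_algebra.
From mathcomp Require Import all_classical all_reals all_analysis.
From mathcomp Require Import ring lra.
Import Order.TTheory GRing.Theory Num.Theory numFieldNormedType.Exports.
Set Implicit Arguments. Unset Strict Implicit. Unset Printing Implicit Defensive.
Local Open Scope ring_scope.

(** * Runs and path weights *)

Lemma card_set_sum n (P : 'I_n -> bool) :
  #|[set i : 'I_n | P i]| = (\sum_(i < n) P i)%N.
Proof.
rewrite -sum1_card big_mkcond /=; apply: eq_bigr => i _; rewrite inE.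
by case: (P i).
Qed.

Definition nchanges (b : bool) (e : seq bool) : nat :=
  (\sum_(i < size e) (nth false e i != nth false (b :: e) i))%N.

(* Short runs of [b :: e], the first step counting as the start of a run iff
   [s]. *)
Definition nshort_from (s b : bool) (e : seq bool) : nat :=
  (\sum_(i < (size e).+1)
    ((if i == 0%N :> nat then s
      else nth false (b :: e) i != nth false (b :: e) i.-1)
     && ((i.+1 == (size e).+1)
         || (nth false (b :: e) i.+1 != nth false (b :: e) i))))%N.

Lemma nchanges_nil b : nchanges b [::] = 0%N.
Proof. by rewrite /nchanges big_ord0. Qed.

Lemma nchanges_cons b c e : nchanges b (c :: e) = ((c != b) + nchanges c e)%N.
Proof. by rewrite /nchanges /= big_ord_recl. Qed.

Lemma nruns_cons b e : nruns (b :: e) = (nchanges b e).+1.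
Proof. by rewrite /nruns card_set_sum /= big_ord_recl. Qed.

Lemma nshort_cons b e : nshort (b :: e) = nshort_from true b e.
Proof.
rewrite /nshort card_set_sum /nshort_from /=; apply: eq_bigr => i _.
by case: (nat_of_ord i).
Qed.

Lemma nshort_from_nil s b : nshort_from s b [::] = s.
Proof. by rewrite /nshort_from big_ord_recl big_ord0 /= andbT addn0. Qed.

Lemma nshort_from_cons s b c e :
  nshort_from s b (c :: e) = ((s && (c != b)) + nshort_from (c != b) c e)%N.
Proof.
rewrite /nshort_from big_ord_recl /=; congr addn.
apply: eq_bigr => i _; rewrite add0n /bump leq0n add1n /=.
by case: (nat_of_ord i).
Qed.

Section PathWeight.
Variables (R : realType) (a r y : R).

Definition persistence_prob (b : bool) (e : seq bool) : R :=
  \prod_(i < size e)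
    (if nth false e i == nth false (b :: e) i then a else 1 - a).

Lemma persistence_prob_nil b : persistence_prob b [::] = 1.
Proof. by rewrite /persistence_prob big_ord0. Qed.

Lemma persistence_prob_cons b c e :
  persistence_prob b (c :: e) = (if c == b then a else 1 - a) * persistence_prob c e.
Proof. by rewrite /persistence_prob /= big_ord_recl. Qed.

Lemma pathprob_cons b e : pathprob a (b :: e) = 2^-1 * persistence_prob b e.
Proof. by rewrite /pathprob /persistence_prob /= big_add1 /= big_mkord. Qed.

(* The state [(b, s)] is the last step and whether its run has length one so
   far: a change of direction closes that run, contributing [(1 - a) r], and a
   further [y] when the closed run was short. *)
Definition step_weight (b s c : bool) : R :=
  if c == b then a else (1 - a) * r * (if s then y else 1).

Fixpoint path_weight (b s : bool) (e : seq bool) : R :=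
  match e with
  | [::] => if s then y else 1
  | c :: e' => step_weight b s c * path_weight c (c != b) e'
  end.

Lemma path_weightE e b s : path_weight b s e =
  persistence_prob b e * r ^+ nchanges b e * y ^+ nshort_from s b e.
Proof.
elim: e b s => [|c e IH] b s /=.
  rewrite persistence_prob_nil nchanges_nil nshort_from_nil !mul1r.
  by case: s; rewrite ?expr1 ?expr0.
rewrite IH persistence_prob_cons nchanges_cons nshort_from_cons /step_weight.
have [->|_] := eqVneq c b; first by rewrite /= add0n andbF add0n; ring.
by rewrite /= andbT add1n exprS exprD; case: s; rewrite ?expr1 ?expr0; ring.
Qed.

Lemma excursion_weight_cons b e :
  pathprob a (b :: e) * r ^+ nruns (b :: e) * y ^+ nshort (b :: e)
  = 2^-1 * r * path_weight b true e.
Proof.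
by rewrite path_weightE pathprob_cons nruns_cons nshort_cons exprS; ring.
Qed.

End PathWeight.

(** * First passages to zero *)

Fixpoint first_zero_at_end (h : int) (e : seq bool) : bool :=
  match e with
  | [::] => h == 0
  | c :: e' => (h != 0) && first_zero_at_end (h + step c) e'
  end.

Lemma pos0 e : pos e 0 = 0.
Proof. by rewrite /pos big_ord0. Qed.

Lemma pos_cons b e j : pos (b :: e) j.+1 = step b + pos e j.
Proof. by rewrite /pos big_ord_recl. Qed.

Lemma forall_ord_recl n (P : 'I_n.+1 -> bool) :
  [forall j, P j] = P ord0 && [forall j : 'I_n, P (lift ord0 j)].
Proof.
apply/forallP/andP => [H | [H0 H1] j]; first by split => //; apply/forallP.
by case: (unliftP ord0 j) => [j' ->|->] //; exact: (forallP H1 j').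
Qed.

Lemma first_zero_at_endE e h : first_zero_at_end h e =
  (h + pos e (size e) == 0) && [forall j : 'I_(size e), h + pos e j != 0].
Proof.
elim: e h => [|c e IH] h /=.
  rewrite pos0 addr0; case: (h == 0) => //=.
  by apply/esym/forallP => -[].
rewrite IH forall_ord_recl /= pos0 addr0 pos_cons addrA.
rewrite andbA [(h != 0) && _]andbC -andbA; congr andb; congr andb.
by apply: eq_forallb => j; rewrite /= pos_cons addrA.
Qed.

Lemma excursion_cons b e : excursion (b :: e) = first_zero_at_end (step b) e.
Proof.
rewrite /excursion first_zero_at_endE /= pos_cons forall_ord_recl /=.
by congr andb; apply: eq_forallb => j; rewrite /= pos_cons.
Qed.

Section TupleSums.
Variable R : realType.

Lemma big_tuple_cons n (F : n.+1.-tuple bool -> R) :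
  \sum_(t : n.+1.-tuple bool) F t
  = \sum_(b : bool) \sum_(t : n.-tuple bool) F [tuple of b :: t].
Proof.
rewrite pair_big /=.
rewrite (reindex (fun p : bool * n.-tuple bool => [tuple of p.1 :: p.2])) //=.
exists (fun t => (thead t, [tuple of behead t])) => [[b t] _|t _] /=.
  by congr pair; apply: val_inj.
by rewrite -tuple_eta.
Qed.

Lemma big_tuple0 (F : 0.-tuple bool -> R) :
  \sum_(t : 0.-tuple bool) F t = F [tuple].
Proof. by rewrite (big_pred1 [tuple]) // => t; apply/esym/eqP; exact: tuple0. Qed.

End TupleSums.

Definition stop_at {R : nzRingType} (b' s' b s : bool) (M : nat) : R :=
  if (b == b') && (s == s') && (M == 0%N) then 1 else 0.

Section HitSum.
Variables (R : realType) (a r y : R).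
Local Notation step_weight := (step_weight a r y).

(* [hit0 h b s N k] sums, over the paths of length at most [N] from height [h]
   and state [(b, s)] stopped at their first visit to zero, the path weight
   times [k] evaluated at the final state and the remaining time. *)
Fixpoint hit0 (h : int) (b s : bool) (N : nat)
    (k : bool -> bool -> nat -> R) {struct N} : R :=
  if h == 0 then k b s N else
  match N with
  | 0%N => 0
  | N'.+1 => \sum_(c : bool) step_weight b s c * hit0 (h + step c) c (c != b) N' k
  end.

Definition close_run (b s : bool) (M : nat) : R :=
  if M == 0%N then (if s then y else 1) else 0.

Lemma sum_first_zero_at_end n h b s :
  \sum_(t : n.-tuple bool) (if first_zero_at_end h t then path_weight a r y b s t else 0)
  = hit0 h b s n close_run.
Proof.
elim: n h b s => [|n IH] h b s; first by rewrite big_tuple0 /=; case: (h == 0).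
rewrite big_tuple_cons /=.
have [h0|hn0] := eqVneq h 0.
  by rewrite big1 // => c _; rewrite big1 // => t _; rewrite /= h0.
apply: eq_bigr => c _; rewrite -IH mulr_sumr; apply: eq_bigr => t _ /=.
by case: first_zero_at_end; rewrite ?mulr0.
Qed.

Lemma Kcoef0 : Kcoef a r y 0 = 0.
Proof. by rewrite /Kcoef big_pred0 // => t; rewrite /excursion size_tuple. Qed.

Lemma Kcoef_hit0 n :
  Kcoef a r y n.+1 = 2^-1 * r * \sum_(b : bool) hit0 (step b) b true n close_run.
Proof.
rewrite /Kcoef big_mkcond /= big_tuple_cons mulr_sumr; apply: eq_bigr => b _.
rewrite -sum_first_zero_at_end mulr_sumr; apply: eq_bigr => t _ /=.
by rewrite excursion_cons excursion_weight_cons; case: first_zero_at_end; rewrite ?mulr0.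
Qed.

Lemma hit00 N b s k : hit0 0 b s N k = k b s N.
Proof. by case: N. Qed.

Lemma hit00_decomp N b s k :
  hit0 0 b s N k = \sum_(m < N.+1) \sum_(b' : bool) \sum_(s' : bool)
                     hit0 0 b s m (stop_at b' s') * k b' s' (N - m)%N.
Proof.
rewrite big_ord_recl [X in _ + X]big1 ?addr0 => [|i _]; last first.
  by rewrite !big1 // => b' _; rewrite big1 // => s' _; rewrite hit00 /stop_at andbF mul0r.
rewrite !hit00 !big_bool /stop_at subn0.
by case: b; case: s => /=; rewrite ?mul1r ?mul0r ?addr0 ?add0r.
Qed.

Lemma hit0_decomp N h b s k : hit0 h b s N k =
  \sum_(m < N.+1) \sum_(b' : bool) \sum_(s' : bool)
    hit0 h b s m (stop_at b' s') * k b' s' (N - m)%N.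
Proof.
elim: N h b s k => [|N IH] h b s k.
  have [->|hn0] := eqVneq h 0; first exact: hit00_decomp.
  rewrite big_ord1 /= (negbTE hn0).
  by rewrite big1 // => b' _; rewrite big1 // => s' _; rewrite mul0r.
have [->|hn0] := eqVneq h 0; first exact: hit00_decomp.
rewrite big_ord_recl /= (negbTE hn0).
rewrite [X in _ = X + _]big1 ?add0r; last first.
  by move=> b' _; rewrite big1 // => s' _; rewrite mul0r.
under eq_bigr => c _ do rewrite IH mulr_sumr.
rewrite exchange_big /=; apply: eq_bigr => i _; rewrite subSS.
under eq_bigr => c _ do rewrite mulr_sumr.
rewrite exchange_big /=; apply: eq_bigr => b' _.
under eq_bigr => c _ do rewrite mulr_sumr.
rewrite exchange_big /=; apply: eq_bigr => s' _.
by rewrite mulr_suml; apply: eq_bigr => c _; ring.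
Qed.

Lemma eq_hit0 N h b s k1 k2 :
  (forall b s M, (M <= N)%N -> k1 b s M = k2 b s M) ->
  hit0 h b s N k1 = hit0 h b s N k2.
Proof.
move=> Ek; rewrite (hit0_decomp N h b s k1) (hit0_decomp N h b s k2).
apply: eq_bigr => m _; apply: eq_bigr => b' _; apply: eq_bigr => s' _.
by rewrite Ek // leq_subr.
Qed.

Lemma hit0_mirror N h b s k :
  hit0 (- h) (~~ b) s N (fun b s M => k (~~ b) s M) = hit0 h b s N k.
Proof.
elim: N h b s k => [|N IH] h b s k /=; rewrite oppr_eq0; case: (h == 0); rewrite ?negbK //.
rewrite !big_bool /= addrC; congr (_ * _ + _ * _).
- by case: b.
- by rewrite -(IH (h + 1)) opprD; case: b.
- by rewrite -(IH (h - 1)) opprD opprK.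
Qed.

(* From a positive height, zero is reached by a down step. *)
Lemma hit0_pos_eq0 N h b s k : 0 < h -> (forall s M, k false s M = 0) ->
  hit0 h b s N k = 0.
Proof.
elim: N h b s => [|N IH] h b s hp Hk /=; first by rewrite gt_eqF.
rewrite gt_eqF // big_bool /= IH ?mulr0 ?add0r //; last by rewrite ltr_wpDr.
have [->|hn] := eqVneq (h - 1) 0; first by rewrite hit00 Hk mulr0.
by rewrite IH ?mulr0 // lt_neqAle eq_sym hn /= subr_ge0 -gtz0_ge1.
Qed.

(* A path from [h + 1] to zero first passes through [h]. *)
Lemma hit0_split N h b s k : 0 < h ->
  hit0 (h + 1) b s N k = hit0 1 b s N (fun b' s' M => hit0 h b' s' M k).
Proof.
elim/ltn_ind: N h b s k => N IH h b s k hp.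
case: N IH => [|N] IH /=; first by rewrite gt_eqF // ltr_wpDr.
rewrite gt_eqF ?ltr_wpDr //; apply: eq_bigr => c _; congr (_ * _).
case: c => /=; last by rewrite addrK subrr !hit00.
rewrite IH // ?ltr_wpDr // (IH N (ltnSn N) 1) //.
by apply: eq_hit0 => b' s' M HM; rewrite IH //; exact: (leq_ltn_trans HM).
Qed.

End HitSum.

(** * Truncated power series *)

Definition eq_modX (R : nzRingType) (M : nat) (p q : {poly R}) : Prop :=
  forall i, (i < M)%N -> p`_i = q`_i.

Section EqModX.
Variables (R : nzRingType) (M : nat).

Lemma eq_modXM (p p' q q' : {poly R}) : eq_modX M p p' -> eq_modX M q q' ->
  eq_modX M (p * q) (p' * q').
Proof.
move=> Hp Hq i Hi; rewrite !coefM; apply: eq_bigr => j _.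
have Hj : (j < M)%N by apply: leq_ltn_trans Hi; rewrite -ltnS.
by rewrite Hp // Hq //; apply: leq_ltn_trans Hi; exact: leq_subr.
Qed.

Lemma eq_modX0M (d t : {poly R}) : eq_modX M d 0 -> eq_modX M (d * t) 0.
Proof. by move=> H; rewrite -(mul0r t); apply: eq_modXM. Qed.

Lemma eq_modX0D (p q : {poly R}) :
  eq_modX M p 0 -> eq_modX M q 0 -> eq_modX M (p + q) 0.
Proof. by move=> Hp Hq i Hi; rewrite coefD Hp // Hq // coef0 addr0. Qed.

End EqModX.

Section Truncation.
Variable R : realType.

Definition trunc (M : nat) (f : nat -> R) : {poly R} := \poly_(i < M) f i.

Lemma coef_trunc M f i : (i < M)%N -> (trunc M f)`_i = f i.
Proof. by move=> Hi; rewrite coef_poly Hi. Qed.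

Lemma coef_truncM M f g i : (i < M)%N -> (trunc M f * trunc M g)`_i = fps_mul f g i.
Proof.
move=> Hi; rewrite coefM /fps_mul; apply: eq_bigr => j _.
rewrite !coef_trunc //; first by apply: leq_ltn_trans Hi; exact: leq_subr.
by apply: leq_ltn_trans Hi; rewrite -ltnS.
Qed.

Lemma trunc_eq_modX_shift M f (p : {poly R}) : f 0%N = 0 ->
  (forall m, (m.+1 < M)%N -> f m.+1 = p`_m) -> eq_modX M (trunc M f - 'X * p) 0.
Proof.
move=> f0 fS [|m] Hm; rewrite coefB coef_trunc // coefXM coef0 /=.
  by rewrite f0 subr0.
by rewrite fS // subrr.
Qed.

Lemma fps_mul_eq0 (f g : nat -> R) m :
  (forall j, (j <= m)%N -> g j = 0) -> fps_mul f g m = 0.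
Proof. by move=> H; rewrite /fps_mul big1 // => i _; rewrite H ?mulr0 // leq_subr. Qed.

Lemma fps_mul_sqS (f : nat -> R) k :
  fps_mul f f k.+1 = 2 * (f 0%N * f k.+1) + \sum_(j < k) f j.+1 * f (k - j)%N.
Proof.
rewrite /fps_mul big_ord_recl big_ord_recr /= subn0 subnn.
under eq_bigr => j _ do rewrite /bump /= add1n subSS.
by rewrite (mulrC (f k.+1)); ring.
Qed.

(* Once [f 0 = 1], the coefficient of [z^(k+1)] in [f^2] determines [f (k+1)]
   from the lower coefficients. *)
Lemma fps_sqrt_uniq (f g : nat -> R) : f 0%N = 1 -> g 0%N = 1 ->
  (forall n, fps_mul f f n = fps_mul g g n) -> forall n, f n = g n.
Proof.
move=> f0 g0 Efg n; elim/ltn_ind: n => -[|k] IH; first by rewrite f0 g0.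
have := Efg k.+1; rewrite !fps_mul_sqS f0 g0.
have -> : \sum_(j < k) f j.+1 * f (k - j)%N = \sum_(j < k) g j.+1 * g (k - j)%N.
  by apply: eq_bigr => j _; rewrite !IH // ltnS // leq_subr.
by move=> E; lra.
Qed.

End Truncation.

(** * The quadratic equation *)

Section Descents.
Variables (R : realType) (a r y : R).
Local Notation hit0 := (hit0 a r y).
Local Notation step_weight := (step_weight a r y).

Definition descent (b s b' s' : bool) (m : nat) : R :=
  hit0 1 b s m (stop_at b' s').

Lemma descent_up_end b s s' m : descent b s true s' m = 0.
Proof. exact: hit0_pos_eq0. Qed.

(* Either the first step goes down to zero, or it goes up to two, and the
   path to zero splits into two descents from height one. *)
Lemma descentS b s b' s' m : descent b s b' s' m.+1 =
  step_weight b s false * (if (b' == false) && (s' == b) && (m == 0%N) then 1 else 0)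
  + step_weight b s true
    * \sum_(s'' : bool) fps_mul (descent true (~~ b) false s'') (descent false s'' b' s') m.
Proof.
rewrite /descent /= big_bool /= addrC; congr (_ + _).
  by rewrite hit00 /stop_at; congr (_ * _); case: b; case: b'; case: s'.
congr (_ * _); rewrite hit0_split // hit0_decomp /fps_mul.
transitivity (\sum_(i < m.+1) \sum_(s'' : bool)
   hit0 1 true (~~ b) i (stop_at false s'') * hit0 1 false s'' (m - i) (stop_at b' s')).
  apply: eq_bigr => i _; rewrite big_bool /= big1 ?add0r; last first.
    by move=> s'' _; rewrite hit0_pos_eq0 ?mul0r.
  by have -> : (true != b) = ~~ b by case: b.
by rewrite exchange_big.
Qed.

Lemma descent_down_short s m : descent false s false true m = 0.
Proof.
elim/ltn_ind: m s => -[|m] IH s //.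
rewrite descentS /= mulr0 add0r big1 ?mulr0 // => s'' _.
by apply: fps_mul_eq0 => j Hj; apply: IH; exact: (leq_ltn_trans Hj).
Qed.

(* [D<start><end>]: the start state is [u]/[d] for a last step up/down,
   followed by [1] when that run has length one so far; the descent ends with
   a down step whose run is short ([S]) or long ([L]). *)
Local Notation Du1S := (descent true true false true).
Local Notation Du1L := (descent true true false false).
Local Notation DuS := (descent true false false true).
Local Notation DuL := (descent true false false false).
Local Notation Dd1L := (descent false true false false).
Local Notation DdL := (descent false false false false).

Lemma descent_up_short s m : descent true s false true m.+1 =
  if m == 0%N then (1 - a) * r * (if s then y else 1) else 0.
Proof.
rewrite descentS /= big1 ?mulr0 ?addr0; last first.
  by move=> s'' _; apply: fps_mul_eq0 => j _; exact: descent_down_short.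
by rewrite /step_weight /=; case: (m == 0%N); rewrite ?mulr1 ?mulr0.
Qed.

Lemma descent_up_long s m :
  descent true s false false m.+1 = a * (fps_mul DuS Dd1L m + fps_mul DuL DdL m).
Proof. by rewrite descentS /= mulr0 add0r big_bool. Qed.

Lemma descent_down_long s m : descent false s false false m.+1 =
  (if m == 0%N then a else 0)
  + (1 - a) * r * (if s then y else 1) * (fps_mul Du1S Dd1L m + fps_mul Du1L DdL m).
Proof.
rewrite descentS /= big_bool /step_weight /=.
by congr (_ + _); case: (m == 0%N); rewrite ?mulr1 ?mulr0.
Qed.

Lemma Kcoef_descent n : Kcoef a r y n.+1 = r * (y * Du1S n + Du1L n).
Proof.
rewrite Kcoef_hit0 big_bool /=.
have -> : hit0 (-1) false true n (close_run y) = hit0 1 true true n (close_run y)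
  := hit0_mirror a r y n 1 true true (close_run y).
have -> : hit0 1 true true n (close_run y) = y * Du1S n + Du1L n.
  rewrite hit0_decomp big_ord_recr /= big1 ?add0r; last first.
    move=> i _; rewrite big1 // => b' _; rewrite big1 // => s' _.
    by rewrite /close_run subn_eq0 leqNgt ltn_ord /= mulr0.
  rewrite subnn big_bool /= [X in X + _]big1 ?add0r; last first.
    by move=> s' _; rewrite -/(descent true true true s' n) descent_up_end mul0r.
  by rewrite big_bool /= /close_run /= mulr1 mulrC.
by field.
Qed.

Lemma Kcoef_eq_modX M :
  eq_modX M (trunc M (Kcoef a r y) - 'X * (r%:P * (y%:P * trunc M Du1S + trunc M Du1L))) 0.
Proof.
apply: trunc_eq_modX_shift; first exact: Kcoef0.
by move=> m Hm; rewrite Kcoef_descent coefCM coefD coefCM !coef_trunc // ltnW.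
Qed.

Lemma descent_up_short_eq_modX M s :
  eq_modX M (trunc M (descent true s false true)
             - 'X * ((1 - a) * r * (if s then y else 1))%:P) 0.
Proof. by apply: trunc_eq_modX_shift => // m _; rewrite descent_up_short coefC. Qed.

Lemma descent_up_long_eq_modX M s :
  eq_modX M (trunc M (descent true s false false) - 'X * (a%:P
    * (trunc M DuS * trunc M Dd1L + trunc M DuL * trunc M DdL))) 0.
Proof.
apply: trunc_eq_modX_shift => // m Hm.
by rewrite descent_up_long coefCM coefD !coef_truncM // ltnW.
Qed.

Lemma descent_down_long_eq_modX M s :
  eq_modX M (trunc M (descent false s false false) - 'X * (a%:P
    + ((1 - a) * r * (if s then y else 1))%:P
      * (trunc M Du1S * trunc M Dd1L + trunc M Du1L * trunc M DdL))) 0.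
Proof.
apply: trunc_eq_modX_shift => // m Hm.
by rewrite descent_down_long coefD coefC coefCM coefD !coef_truncM // ltnW.
Qed.

End Descents.

Section Quadratic.
Variables (R : realType) (a r y : R).

Lemma quadratic_elimination M (Kt DuS DuL Du1S Du1L Dd1L DdL : {poly R}) :
  let G := 1 - (1 - a)%:P * Kt in
  eq_modX M (Kt - 'X * (r%:P * (y%:P * Du1S + Du1L))) 0 ->
  eq_modX M (Du1S - 'X * ((1 - a) * r * y)%:P) 0 ->
  eq_modX M (DuS - 'X * ((1 - a) * r)%:P) 0 ->
  eq_modX M (Du1L - 'X * (a%:P * (DuS * Dd1L + DuL * DdL))) 0 ->
  eq_modX M (DuL - 'X * (a%:P * (DuS * Dd1L + DuL * DdL))) 0 ->
  eq_modX M (Dd1L - 'X * (a%:P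
    + ((1 - a) * r * y)%:P * (Du1S * Dd1L + Du1L * DdL))) 0 ->
  eq_modX M (DdL - 'X * (a%:P
    + ((1 - a) * r)%:P * (Du1S * Dd1L + Du1L * DdL))) 0 ->
  eq_modX M (G ^+ 2 - beta_a a r y * G + x_a a r y) 0.
Proof.
move=> G.
set DK := Kt - _; set Du1S' := Du1S - _; set DuS' := DuS - _.
set Du1L' := Du1L - _; set DuL' := DuL - _; set Dd1L' := Dd1L - _; set DdL' := DdL - _.
move=> hK hu1S huS hu1L huL hd1L hdL.
pose c := ((1 - a) * r)%:P * 'X.
pose A := a%:P * 'X.
pose yp := y%:P.
pose tau := 1 + c ^+ 2 * yp * (1 - yp).
pose Mm := DuS * Dd1L + DuL * DdL.
pose Nn := Du1S * Dd1L + Du1L * DdL.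
pose m0 := Nn * tau + c * A * (1 - yp).
pose w0 := A + c * Nn.
pose J0m := c ^+ 2 * yp ^+ 2 + c * A * Mm.
pose J0m0 := c ^+ 2 * yp ^+ 2 + c * A * m0.
pose e := (1 - a)%:P * DK + c * yp * Du1S' + c * Du1L'.
pose F1 := 2%:R * J0m + e - 2%:R + beta_a a r y.
pose F2 := c * A * (J0m + J0m0 - 2%:R + beta_a a r y) + c * A * tau * (1 - A * w0).
(* A certificate, found by elimination, placing the quadratic in the ideal
   generated by the seven relations. *)
have -> : G ^+ 2 - beta_a a r y * G + x_a a r y =
   DK * ((1 - a)%:P * F1) + Du1S' * (c * yp * F1 - Dd1L * F2)
   + Du1L' * (c * F1 - DdL * F2) + Dd1L' * (c * (1 - yp) * F2 - c * A * tau * c)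
   + DuS' * (Dd1L * F2 - c * A * tau * Dd1L) + DuL' * (DdL * F2 - c * A * tau * DdL)
   + DdL' * (- (c * A * tau * A * Mm)).
  rewrite /F1 /F2 /e /J0m /J0m0 /w0 /m0 /Nn /Mm /tau /yp /A /c.
  rewrite /DK /Du1S' /DuS' /Du1L' /DuL' /Dd1L' /DdL' /G /beta_a /x_a /tau_a.
  rewrite !(polyCM, polyCB, polyC_exp, polyC1).
  ring.
by repeat apply: eq_modX0D; apply: eq_modX0M.
Qed.

Lemma quadratic_eq_modX M :
  let G := 1 - (1 - a)%:P * trunc M (Kcoef a r y) in
  eq_modX M (G ^+ 2 - beta_a a r y * G + x_a a r y) 0.
Proof.
have hu1S := @descent_up_short_eq_modX R a r y M true.
have huS := @descent_up_short_eq_modX R a r y M false; rewrite /= mulr1 in huS.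
have hd1L := @descent_down_long_eq_modX R a r y M true.
have hdL := @descent_down_long_eq_modX R a r y M false; rewrite /= mulr1 in hdL.
exact (quadratic_elimination (@Kcoef_eq_modX R a r y M) hu1S huS
  (@descent_up_long_eq_modX R a r y M true)
  (@descent_up_long_eq_modX R a r y M false) hd1L hdL).
Qed.

End Quadratic.

Lemma coef0_beta_a (R : realType) (a r y : R) : (beta_a a r y)`_0 = 1.
Proof. by rewrite /beta_a coefD coef1 coefXnM /= addr0. Qed.

(* With [G := 1 - (1 - a) K], the quadratic gives
   [(2 G - beta_a)^2 = beta_a^2 - 4 x_a], and [2 G - beta_a] has constant term 1. *)
Lemma Kcoef_closed_form (R : realType) (a r y : R) : a != 1 ->
  forall alpha : nat -> R, alpha 0%N = 1 ->
  (forall n, fps_mul alpha alpha n = (disc_a a r y)`_n) ->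
  forall n, Kcoef a r y n =
    (((1 : {poly R}) - 2^-1 *: beta_a a r y)`_n - 2^-1 * alpha n) / (1 - a).
Proof.
move=> a1 alpha alpha0 alpha_sq.
pose root n := 2 * ((n == 0%N)%:R - (1 - a) * Kcoef a r y n) - (beta_a a r y)`_n.
have root_sq n : fps_mul root root n = (disc_a a r y)`_n.
  pose G := 1 - (1 - a)%:P * trunc n.+1 (Kcoef a r y).
  have Eroot : eq_modX n.+1 (trunc n.+1 root) (2%:R * G - beta_a a r y).
    move=> i Hi; rewrite coef_trunc // coefB mulr_natl coefMn coefB coef1 coefCM.
    by rewrite coef_trunc // /root mulr_natl.
  rewrite -(coef_truncM _ _ (ltnSn n)) (eq_modXM Eroot Eroot) //.
  have -> : (2%:R * G - beta_a a r y) * (2%:R * G - beta_a a r y) =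
            4%:R * (G ^+ 2 - beta_a a r y * G + x_a a r y) + disc_a a r y.
    by rewrite /disc_a scaler_nat -mulr_natl; ring.
  by rewrite coefD mulr_natl coefMn (quadratic_eq_modX a r y (ltnSn n)) coef0 mul0rn add0r.
have root0 : root 0%N = 1 by rewrite /root Kcoef0 coef0_beta_a /=; ring.
have Ealpha n : alpha n = root n.
  by apply: fps_sqrt_uniq => // k; rewrite alpha_sq root_sq.
move=> n; rewrite Ealpha /root coefB coef1 coefZ.
have a1' : 1 - a != 0 by rewrite subr_eq0 eq_sym.
by field.
Qed.

(** * The excursion ends almost surely *)

Lemma convex_comb_le1 (R : realType) (a u v : R) : 0 <= a <= 1 ->
  0 <= u <= 1 -> 0 <= v <= 1 -> 0 <= a * u + (1 - a) * v <= 1.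
Proof. by move=> /andP[? ?] /andP[? ?] /andP[? ?]; apply/andP; split; nra. Qed.

Section Recurrence.
Variables (R : realType) (a : R).
Hypothesis a01 : 0 <= a <= 1.

(* For [r = y = 1] the step weights are transition probabilities. *)
Lemma hit0_prob_le1 N h b s k : (forall b s M, 0 <= k b s M <= 1) ->
  0 <= hit0 a 1 1 h b s N k <= 1.
Proof.
move=> k01; elim: N h b s => [|N IH] h b s /=; case: (h == 0); rewrite ?lexx ?ler01 //.
rewrite big_bool /step_weight.
move: (IH (h + step true) true (true != b)) (IH (h + step false) false (false != b)).
case: b; case: s => /= u01 v01; rewrite ?mulr1;
  first [exact: convex_comb_le1 | rewrite addrC; exact: convex_comb_le1].
Qed.

Lemma descent_prob_ge0 b s b' s' m : 0 <= descent a 1 1 b s b' s' m.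
Proof.
have k01 b1 s1 M : 0 <= (stop_at b' s' b1 s1 M : R) <= 1.
  by rewrite /stop_at; case: ifP; rewrite ?lexx ?ler01.
by have /andP[] := hit0_prob_le1 m 1 b s k01.
Qed.

Lemma Kcoef11S n :
  Kcoef a 1 1 n.+1
  = descent a 1 1 true true false true n + descent a 1 1 true true false false n.
Proof. by rewrite Kcoef_descent !mul1r. Qed.

Lemma Kcoef11_ge0 n : 0 <= Kcoef a 1 1 n.
Proof. by case: n => [|n]; rewrite ?Kcoef0 // Kcoef11S addr_ge0 ?descent_prob_ge0. Qed.


Definition prob_L_lt (M : nat) : R := \sum_(n < M) Kcoef a 1 1 n.

Lemma prob_L_lt_nd : nondecreasing_seq prob_L_lt.
Proof.
by apply/nondecreasing_seqP => n; rewrite /prob_L_lt big_ord_recr /= lerDl Kcoef11_ge0.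
Qed.

(* [prob_L_lt m.+2] is the probability that a path from height one reaches
   zero within [m] steps. *)
Lemma prob_L_lt_le1 m : prob_L_lt m <= 1.
Proof.
have k01 (b s : bool) (M : nat) : 0 <= (1 : R) <= 1 by rewrite ler01 lexx.
have /andP[_] := hit0_prob_le1 m 1 true true k01.
have -> : hit0 a 1 1 1 true true m (fun _ _ _ => 1) = prob_L_lt m.+2.
  rewrite hit0_decomp /prob_L_lt [RHS]big_ord_recl Kcoef0 add0r.
  apply: eq_bigr => i _.
  rewrite lift0 Kcoef11S big_bool /= [X in X + _]big1 ?add0r.
    by rewrite big_bool /= !mulr1.
  by move=> s' _; rewrite -/(descent a 1 1 true true true s' i) descent_up_end mul0r.
by apply: le_trans; apply: prob_L_lt_nd; exact: ltnW (leqnSn m.+1).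
Qed.

Lemma Kcoef11_eq_modX N : a != 1 ->
  let Pt := trunc N (Kcoef a 1 1) in
  eq_modX N ((1 - a)%:P * (Pt * Pt) - Pt + (2 * a - 1)%:P * ('X^2 * Pt)
             + (1 - a)%:P * 'X^2) 0.
Proof.
move=> a1 Pt i Hi; set Q := _ + _ * 'X^2.
have := quadratic_eq_modX a 1 1 Hi.
have -> : let G := 1 - (1 - a)%:P * Pt in
          G ^+ 2 - beta_a a 1 1 * G + x_a a 1 1 = (1 - a)%:P * Q.
  by rewrite /Q /beta_a /x_a /tau_a !(polyCM, polyCB, polyC_exp, polyC1, polyCD); ring.
rewrite coefCM coef0 => /eqP; rewrite mulf_eq0 subr_eq0 eq_sym (negbTE a1) /=.
by move=> /eqP ->.
Qed.

Lemma prob_L_lt_relation n : a != 1 ->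
  (1 - a) * \sum_(i < n.+3) (trunc n.+3 (Kcoef a 1 1) * trunc n.+3 (Kcoef a 1 1))`_i
  - prob_L_lt n.+3 + (2 * a - 1) * prob_L_lt n.+1 + (1 - a) = 0.
Proof.
move=> a1; set Pt := trunc n.+3 _.
have sum_Pt : \sum_(i < n.+3) Pt`_i = prob_L_lt n.+3.
  by apply: eq_bigr => i _; rewrite coef_trunc.
have sum_X2Pt : \sum_(i < n.+3) ('X^2 * Pt)`_i = prob_L_lt n.+1.
  rewrite 2!big_ord_recl !coefXnM /= !add0r; apply: eq_bigr => i _.
  by rewrite coefXnM /= subn2 /= coef_trunc // (leq_trans (ltn_ord i)) // ltnW.
have sum_X2 : \sum_(i < n.+3) ('X^2 : {poly R})`_i = 1.
  rewrite 3!big_ord_recl big1 => [|i _]; last by rewrite coefXn.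
  by rewrite !coefXn /= !add0r addr0.
have Esum : \sum_(i < n.+3) ((1 - a)%:P * (Pt * Pt) - Pt
    + (2 * a - 1)%:P * ('X^2 * Pt) + (1 - a)%:P * 'X^2)`_i = 0.
  by apply: big1 => i _; rewrite (@Kcoef11_eq_modX n.+3 a1) // coef0.
rewrite -[RHS]Esum.
under [RHS]eq_bigr do rewrite !coefD coefN !coefCM.
by rewrite !big_split /= -!mulr_sumr sumrN sum_Pt sum_X2Pt sum_X2 mulr1.
Qed.

Lemma prob_L_lt_sqr_le M N : (2 * M <= N)%N ->
  prob_L_lt M ^+ 2
  <= \sum_(i < N) (trunc N (Kcoef a 1 1) * trunc N (Kcoef a 1 1))`_i.
Proof.
move=> MN; set Pt := trunc N _; pose Pm := trunc M (Kcoef a 1 1).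
have Pm_le k : 0 <= Pm`_k <= Pt`_k.
  rewrite /Pm /Pt /trunc !coef_poly.
  case: (ltnP k M) => kM; last by case: (k < N)%N; rewrite ?lexx ?Kcoef11_ge0.
  rewrite ifT ?lexx ?Kcoef11_ge0 //; apply: leq_trans MN; apply: leq_trans kM _.
  by rewrite leq_pmull.
have -> : prob_L_lt M = Pm.[1].
  rewrite (horner_coef_wide 1 (size_poly M _)); apply: eq_bigr => i _.
  by rewrite expr1n mulr1 coef_trunc.
rewrite expr2 -hornerM (@horner_coef_wide _ N).
  apply: ler_sum => i _; rewrite expr1n mulr1 !coefM; apply: ler_sum => j _.
  by have /andP[? ?] := Pm_le j; have /andP[? ?] := Pm_le (i - j)%N; exact: ler_pM.
apply: leq_trans (size_polyMleq _ _) _; apply: leq_trans MN.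
rewrite mul2n -addnn; apply: leq_trans (leq_pred _) _.
by apply: leq_add; exact: size_poly.
Qed.

(* The relation at [N = 2 M + 3] and [prob_L_lt_sqr_le]; as [M -> oo] the
   right-hand side tends to [(1 - a) (2 l - 1)], whence [(1 - a) (l - 1)^2 <= 0]
   when [l] is the limit. *)
Lemma prob_L_lt_sqr_bound l M : a != 1 -> (forall n, prob_L_lt n <= l) ->
  (1 - a) * prob_L_lt M ^+ 2
  <= 2 * (1 - a) * l + `|2 * a - 1| * (l - prob_L_lt M) - (1 - a).
Proof.
move=> a1 Sle; case/andP: (a01) => a_ge0 a_le1.
have rel := prob_L_lt_relation (2 * M) a1.
have sq := prob_L_lt_sqr_le (ltnW (ltnW (leqnSn (2 * M).+2))).
have h1 := Sle (2 * M).+3.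
have h2 : prob_L_lt (2 * M).+1 <= prob_L_lt (2 * M).+3 by apply: prob_L_lt_nd; rewrite ltnW.
have h3 : prob_L_lt M <= prob_L_lt (2 * M).+1.
  by apply: prob_L_lt_nd; rewrite mul2n -addnn (leq_trans (leq_addr M M)).
have h4 := ler_norm (2 * a - 1); have h5 := normr_ge0 (2 * a - 1).
move: rel sq h1 h2 h3 h4 h5; set T := \sum_(i < _) _.
set S3 := prob_L_lt _.+3; set S1 := prob_L_lt _.+1; set S := prob_L_lt M.
move=> rel sq *.
have : (1 - a) * S ^+ 2 <= S3 - (2 * a - 1) * S1 - (1 - a) by nra.
by nra.
Qed.

End Recurrence.

Local Open Scope classical_set_scope.
Local Open Scope ring_scope.

Lemma prob_L_lt_cvg1 (R : realType) (a : R) : 0 < a < 1 -> prob_L_lt a @ \oo --> (1 : R).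
Proof.
move=> /andP[a0 a1]; have a01 : 0 <= a <= 1 by rewrite !ltW.
have a_neq1 : a != 1 by rewrite lt_eqF.
have nd := prob_L_lt_nd a01.
have cS : cvgn (prob_L_lt a).
  by apply: nondecreasing_is_cvgn nd _; exists 1 => _ [n _ <-]; exact: prob_L_lt_le1.
set l := limn (prob_L_lt a) in cS.
have Sle : forall M, prob_L_lt a M <= l := nondecreasing_cvgn_le nd cS.
have bound M := prob_L_lt_sqr_bound a01 M a_neq1 Sle.
have lhs_cvg : (fun M => (1 - a) * prob_L_lt a M ^+ 2) @ \oo --> (1 - a) * l ^+ 2.
  under eq_fun do rewrite expr2.
  by rewrite expr2; apply: cvgM; [exact: cvg_cst | exact: cvgM].
have rhs_cvg : (fun M => 2 * (1 - a) * l + `|2 * a - 1| * (l - prob_L_lt a M) - (1 - a))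
    @ \oo --> 2 * (1 - a) * l + `|2 * a - 1| * (l - l) - (1 - a).
  apply: cvgB; last exact: cvg_cst.
  apply: cvgD; first exact: cvg_cst.
  by apply: cvgM; [exact: cvg_cst | apply: cvgB; [exact: cvg_cst | exact: cS]].
have le_l : (1 - a) * l ^+ 2 <= 2 * (1 - a) * l + `|2 * a - 1| * (l - l) - (1 - a).
  by apply: (ler_cvg_to lhs_cvg rhs_cvg); exact: filterE.
rewrite subrr mulr0 addr0 in le_l.
have l1 : l = 1.
  by apply/eqP; rewrite -subr_eq0 -sqrf_eq0 eq_le sqr_ge0 andbT; nra.
by rewrite -l1.
Qed.

(** * Conditioning on the height *)

Lemma abs_pos_le e j : (absz (pos e j) <= j)%N.
Proof.
elim: j => [|j IH]; first by rewrite pos0.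
rewrite /pos big_ord_recr /= -/(pos e j).
rewrite -lez_nat abszE (le_trans (ler_normD _ _)) //.
have -> : `|step (nth false e j)| = 1 by case: (nth false e j).
by rewrite -addn1 PoszD lerD2r -abszE lez_nat.
Qed.

Lemma heightle_size e N : (size e <= N)%N -> heightle e N.
Proof.
move=> eN; apply/forallP => j; apply/implyP => _.
by apply: leq_trans (abs_pos_le e j) _; apply: leq_trans eN; rewrite -ltnS.
Qed.

Section Height.
Variables (R : realType) (a : R).

Lemma KHcoef_eq (r y : R) N n : (n <= N)%N -> KHcoef a r y N n = Kcoef a r y n.
Proof.
by move=> nN; apply: eq_bigl => e; rewrite heightle_size ?andbT // size_tuple.
Qed.

Lemma pLH_eq N n : (n <= N)%N -> pLH a N n = Kcoef a 1 1 n.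
Proof.
move=> nN; rewrite -(KHcoef_eq 1 1 nN); apply: eq_bigr => e _.
by rewrite !expr1n !mulr1.
Qed.

Hypothesis a01 : 0 <= a <= 1.

Lemma pathprob_ge0 e : 0 <= pathprob a e.
Proof.
case/andP: a01 => a0 a1; rewrite /pathprob mulr_ge0 ?invr_ge0 ?ler0n //.
by apply: prodr_ge0 => i _; case: ifP; rewrite ?subr_ge0.
Qed.

Lemma pLH_bounds N n : 0 <= pLH a N n <= Kcoef a 1 1 n.
Proof.
rewrite -(pLH_eq (leqnn n)) sumr_ge0 => [|e _]; last exact: pathprob_ge0.
rewrite /pLH big_mkcond [X in _ <= X]big_mkcond /=; apply: ler_sum => e _.
rewrite [heightle e n]heightle_size ?size_tuple // andbT.
by case: (excursion e) => //; case: heightle; rewrite ?pathprob_ge0.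
Qed.

End Height.

Lemma pH_bounds (R : realType) (a : R) N : 0 <= a <= 1 ->
  prob_L_lt a N <= pH a N <= 1.
Proof.
move=> a01; pose T m := \sum_(k < m) pLH a N k.
have T_nd : nondecreasing_seq T.
  apply/nondecreasing_seqP => m; rewrite /T big_ord_recr /= lerDl.
  by case/andP: (pLH_bounds a01 N m).
have T_le m : T m <= prob_L_lt a m.
  by apply: ler_sum => k _; case/andP: (pLH_bounds a01 N k).
have T_le1 m : T m <= 1 by apply: le_trans (T_le m) (prob_L_lt_le1 a01 m).
have cT : cvgn T.
  by apply: nondecreasing_is_cvgn T_nd _; exists 1 => _ [m _ <-]; exact: T_le1.
apply/andP; split; last by apply: (cvgr_to_le cT); exact: filterE.
apply: le_trans (nondecreasing_cvgn_le T_nd cT N.+1).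
have -> : prob_L_lt a N = \sum_(k < N) pLH a N k.
  by apply: eq_bigr => k _; rewrite pLH_eq // ltnW.
by rewrite /T big_ord_recr /= lerDl; case/andP: (pLH_bounds a01 N N).
Qed.

Lemma pH_cvg1 (R : realType) (a : R) : 0 < a < 1 -> pH a @ \oo --> (1 : R).
Proof.
move=> a01; have a01c : 0 <= a <= 1 by case/andP: a01 => a0 a1; rewrite !ltW.
apply: (@squeeze_cvgr _ _ _ _ (prob_L_lt a) (fun _ => 1)).
- by apply: filterE => N; exact: pH_bounds.
- exact: prob_L_lt_cvg1.
- exact: cvg_cst.
Qed.

Lemma KHcoef_cond_cvg (R : realType) (a r y : R) : 0 < a < 1 ->
  forall n, (fun N : nat => KHcoef a r y N n / pH a N) @ \oo --> Kcoef a r y n.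
Proof.
move=> a01 n; rewrite -[Kcoef a r y n]divr1.
apply: cvg_trans (cvgM (cvg_cst (Kcoef a r y n)) (cvgV (oner_neq0 R) (pH_cvg1 a01))).
apply: near_eq_cvg; near=> N; rewrite KHcoef_eq //; near: N.
exact: nbhs_infty_ge.
Unshelve. all: by end_near.
Qed.

Unset Implicit Arguments.

Theorem corollary3 (R : realType) (a r y : R) :
  0 < a < 1 ->
  (forall alpha : nat -> R,
      alpha 0%N = 1 ->
      (forall n, fps_mul alpha alpha n = (disc_a a r y)`_n) ->
      forall n, Kcoef a r y n =
        (((1 : {poly R}) - 2^-1 *: beta_a a r y)`_n - 2^-1 * alpha n) / (1 - a))
  /\
  (forall n, (fun N : nat => KHcoef a r y N n / pH a N) @ \oo --> Kcoef a r y n).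
Proof.
move=> a01; split; last exact: KHcoef_cond_cvg.
by apply: Kcoef_closed_form; case/andP: a01 => _ a1; rewrite lt_eqF.
Qed.
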